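(* Let $V$ be a valuation domain. (1) If $P$ is a branched prime ideal of $V$ and $Q$ is the prime ideal of $V$ directly below $P$ (i.e. $Q\subsetneq P$ with no prime ideal strictly between them), then the closure of $\mathcal P(P)$ in the constructible topology of $\mathcal I(V)$ is $\mathcal P(P)\cup\{Q\}$. (2) The set $\mathcal P_V$ of all primary ideals of $V$ is proconstructible in $\mathcal I(V)$.
   Context: A prime ideal $\mathfrak p$ is branched if there exists a $\mathfrak p$-primary ideal distinct from $\mathfrak p$ (for a branched prime of a valuation domain, the prime directly below it exists). $\mathcal P(P)$ denotes the set of $P$-primary ideals. $\mathcal I(V)$ is the set of ideals of $V$ with the Zariski topology having basis of open sets $\mathcal B(x_1,\ldots,x_n):=\{I\mid x_1,\ldots,x_n\in I\}$; it is spectral. The constructible topology is the coarsest topology in which all open quasi-compact subsets are clopen; proconstructible means closed in the constructible topology. *)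

From HB Require Import structures.
From mathcomp Require Import all_boot all_order all_algebra.
From mathcomp Require Import boolp classical_sets.
Set Implicit Arguments. Unset Strict Implicit. Unset Printing Implicit Defensive.
Import GRing.Theory.
Local Open Scope classical_set_scope.
Local Open Scope ring_scope.

Definition rdivides (R : comNzRingType) (a b : R) : Prop := exists c : R, b = a * c.

Definition valuation_domain (R : idomainType) : Prop :=
  forall a b : R, rdivides a b \/ rdivides b a.

Definition is_ideal (R : comNzRingType) (I : set R) : Prop :=
  [/\ I 0,
      (forall x y, I x -> I y -> I (x + y)) &
      (forall r x, I x -> I (r * x))].

Record ideal (R : comNzRingType) := Ideal { iset :> set R; iset_ideal : is_ideal iset }.

Definition is_prime (R : comNzRingType) (P : set R) : Prop :=
  [/\ is_ideal P, ~ P 1 & forall a b, P (a * b) -> P a \/ P b].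

Definition radical (R : comNzRingType) (I : set R) : set R :=
  [set x | exists n : nat, I (x ^+ n)].

Definition is_primary (R : comNzRingType) (I : set R) : Prop :=
  [/\ is_ideal I, ~ I 1 &
      forall a b, I (a * b) -> I a \/ exists n : nat, I (b ^+ n)].

Definition primaries_of (R : comNzRingType) (P : set R) : set (ideal R) :=
  [set I : ideal R | is_primary I /\ radical I = P].

Definition all_primaries (R : comNzRingType) : set (ideal R) :=
  [set I : ideal R | is_primary I].

Definition branched (R : comNzRingType) (P : set R) : Prop :=
  exists I : ideal R, primaries_of P I /\ (I : set R) <> P.

Definition directly_below (R : comNzRingType) (Q P : set R) : Prop :=
  [/\ is_prime Q, Q `<=` P, Q <> P &
      forall L : set R, is_prime L -> Q `<=` L -> L `<=` P -> L = Q \/ L = P].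

Definition zbasic (R : comNzRingType) (xs : seq R) : set (ideal R) :=
  [set I : ideal R | forall i, (i < size xs)%N -> (I : set R) (nth 0 xs i)].

Definition zariski_open (R : comNzRingType) (U : set (ideal R)) : Prop :=
  forall I, U I -> exists xs : seq R, zbasic xs I /\ zbasic xs `<=` U.

Definition zariski_qc (R : comNzRingType) (A : set (ideal R)) : Prop :=
  forall G : set (set (ideal R)),
    (forall U, G U -> zariski_open U) -> A `<=` \bigcup_(U in G) U ->
    exists (n : nat) (F : nat -> set (ideal R)),
      (forall i, (i < n)%N -> G (F i)) /\
      A `<=` [set I | exists i, (i < n)%N /\ F i I].

Inductive gen_open (X : Type) (S : set (set X)) : set X -> Prop :=
  | gen_sub U : S U -> gen_open S U
  | gen_setT : gen_open S setT
  | gen_setI U V : gen_open S U -> gen_open S V -> gen_open S (U `&` V)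
  | gen_bigcup (G : set (set X)) :
      (forall U, G U -> gen_open S U) -> gen_open S (\bigcup_(U in G) U).

(** The constructible topology: the coarsest topology in which all Zariski
    open quasi-compact sets are clopen, i.e. generated by these sets and their
    complements. *)
Definition cons_subbasis (R : comNzRingType) : set (set (ideal R)) :=
  [set U | (zariski_open U /\ zariski_qc U) \/
           (zariski_open (~` U) /\ zariski_qc (~` U))].

Definition cons_open (R : comNzRingType) (U : set (ideal R)) : Prop :=
  gen_open (@cons_subbasis R) U.

Definition cons_closure (R : comNzRingType) (A : set (ideal R)) : set (ideal R) :=
  [set I | forall U, cons_open U -> U I -> exists J, A J /\ U J].

Definition proconstructible (R : comNzRingType) (A : set (ideal R)) : Prop :=
  cons_open (~` A).

From mathcomp Require Import all_boot all_order all_algebra.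
From mathcomp Require Import boolp classical_sets.
From mathcomp Require Import ring.
Set Implicit Arguments. Unset Strict Implicit. Unset Printing Implicit Defensive.
Import GRing.Theory.
Local Open Scope classical_set_scope.
Local Open Scope ring_scope.

(* Constructible open sets are built from finitely many conditions [x ∈ I] and
   [x ∉ I].  Around a prime [Q], the conditions [x ∈ I] hold on every ideal
   containing [Q], and the conditions [x ∉ I] merge into a single [y ∉ I] with
   [y ∉ Q]; so each constructible neighbourhood of [Q] contains all ideals
   [J ⊇ Q] missing some [y ∉ Q].  When [Q] is directly below [P] in a valuation
   domain, every [P]-primary ideal contains [Q], and for [w ∈ P \ Q] the
   [P]-primary ideal [w²V_P ∩ V] misses [w]; taking [w = p y] puts [Q] in the
   closure of [P(P)].  Conversely, non-primary ideals have the constructible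
   neighbourhood [B(ab) \ B(a)] of non-primary ideals, so the closure consists
   of primary ideals between [Q] and [P]; any such ideal other than [Q] has an
   element [x ∉ Q], which divides a power of every element of [P], hence its
   radical is [P]. *)

Section Ideals.
Variable R : comNzRingType.
Implicit Types (I P Q : set R) (x y : R).

Lemma ideal_inj : injective (@iset R).
Proof.
case=> I HI [J HJ] /= eIJ; subst J.
by rewrite (Prop_irrelevance HI HJ).
Qed.

Lemma ideal0 I : is_ideal I -> I 0.
Proof. by case. Qed.

Lemma idealD I x y : is_ideal I -> I x -> I y -> I (x + y).
Proof. by case=> _ + _; apply. Qed.

Lemma idealMl I r x : is_ideal I -> I x -> I (r * x).
Proof. by case=> _ _; apply. Qed.

Lemma idealMr I x r : is_ideal I -> I x -> I (x * r).
Proof. by move=> idI Ix; rewrite mulrC; apply: idealMl. Qed.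

Lemma ideal_notin_neq0 I x : is_ideal I -> ~ I x -> x != 0.
Proof. by move=> idI nIx; apply: contra_notN nIx => /eqP ->; apply: ideal0. Qed.

Lemma ideal_rdivides I x y : is_ideal I -> I x -> rdivides x y -> I y.
Proof. by move=> idI Ix [c ->]; apply: idealMr. Qed.

Lemma rdivides_ideal x : is_ideal [set z | rdivides x z].
Proof.
split.
- by exists 0; rewrite mulr0.
- by move=> y z [c1 ->] [c2 ->]; exists (c1 + c2); rewrite mulrDr.
- by move=> r y [c ->]; exists (r * c); rewrite mulrCA.
Qed.

Lemma prime_ideal P : is_prime P -> is_ideal P.
Proof. by case. Qed.

Lemma primeX P x n : is_prime P -> P (x ^+ n) -> P x.
Proof.
move=> [_ nP1 Pmul]; elim: n => [|n IHn]; first by rewrite expr0 => /nP1.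
by rewrite exprS => /Pmul [|/IHn].
Qed.

Lemma prime_notinM P x y : is_prime P -> ~ P x -> ~ P y -> ~ P (x * y).
Proof. by move=> [_ _ Pmul] nPx nPy /Pmul []. Qed.

Lemma prime_notin_rdivides1 P x : is_prime P -> P x -> ~ rdivides x 1.
Proof. by move=> [idP nP1 _] Px /(ideal_rdivides idP Px). Qed.

Lemma directly_below_witness Q P : directly_below Q P -> exists2 p, P p & ~ Q p.
Proof.
case=> _ QP QneP _; have /nonsubset[p [Pp nQp]] : ~ P `<=` Q.
  by move=> PQ; apply: QneP; apply/seteqP.
by exists p.
Qed.

End Ideals.

Section ConstructibleTopology.
Variable R : comNzRingType.
Implicit Types (A U W : set (ideal R)) (Q : set R) (x y : R).

Lemma zbasic1 x (I : ideal R) : zbasic [:: x] I <-> iset I x.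
Proof. by split => [/(_ 0%N)|Ix [|i]] //; apply. Qed.

Lemma zariski_open_zbasic (xs : seq R) : zariski_open (zbasic xs).
Proof. by move=> I xsI; exists xs; split. Qed.

Lemma zariski_qc_zbasic1 x : zariski_qc (zbasic [:: x]).
Proof.
move=> G Gopen cover.
have /cover[U GU Ux] : zbasic [:: x] (Ideal (rdivides_ideal x)).
  by apply/zbasic1; exists 1; rewrite mulr1.
have [xs [xs_x xsU]] := Gopen U GU _ Ux.
exists 1%N, (fun=> U); split=> // I /zbasic1 Ix; exists 0%N; split=> //.
by apply: xsU => i /xs_x; apply: ideal_rdivides Ix; apply: iset_ideal.
Qed.

Lemma cons_open_zbasic1 x : cons_open (zbasic [:: x]).
Proof.
by apply: gen_sub; left; split; [apply: zariski_open_zbasic | apply: zariski_qc_zbasic1].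
Qed.

Lemma cons_open_setC_zbasic1 x : cons_open (~` zbasic [:: x]).
Proof.
apply: gen_sub; right; rewrite setCK.
by split; [apply: zariski_open_zbasic | apply: zariski_qc_zbasic1].
Qed.

Lemma cons_open_nbhd A :
  (forall I, A I -> exists2 U, cons_open U & U I /\ U `<=` A) -> cons_open A.
Proof.
move=> Anbhd; have -> : A = \bigcup_(U in [set U | cons_open U /\ U `<=` A]) U.
  apply/seteqP; split=> [I /Anbhd[U Uopen [UI UA]]|I [U [_ UA] /UA]] //.
  by exists U.
by apply: gen_bigcup => U [].
Qed.

Lemma sub_cons_closure A : A `<=` cons_closure A.
Proof. by move=> I AI U _ UI; exists I. Qed.

Lemma cons_closure_min A B : cons_open (~` B) -> A `<=` B -> cons_closure A `<=` B.
Proof.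
move=> openCB AB I clI; apply: contrapT => nBI.
by have [J [/AB BJ]] := clI _ openCB nBI.
Qed.

Lemma cons_closure_witness A (I : ideal R) x :
  cons_closure A I -> iset I x -> exists2 J : ideal R, A J & iset J x.
Proof.
move=> clI /zbasic1 Ix.
by have [J [AJ /zbasic1 Jx]] := clI _ (cons_open_zbasic1 x) Ix; exists J.
Qed.

Lemma cons_closure_forall A (I : ideal R) y :
  cons_closure A I -> (forall J : ideal R, A J -> iset J y) -> iset I y.
Proof.
move=> clI Ay; apply: contrapT => nIy.
have nBI : (~` zbasic [:: y]) I by move/zbasic1.
have [J [AJ]] := clI _ (cons_open_setC_zbasic1 y) nBI.
by apply; apply/zbasic1; apply: Ay.
Qed.

Definition cone_nbhd Q U : Prop :=
  exists2 y, ~ Q y & forall J : ideal R, Q `<=` J -> ~ iset J y -> U J.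

Section ConeNbhd.
Variable Q : ideal R.
Hypothesis Qprime : is_prime Q.

Lemma cone_nbhdS U W : U `<=` W -> cone_nbhd Q U -> cone_nbhd Q W.
Proof. by move=> UW [y nQy Uy]; exists y => // J QJ /(Uy J QJ)/UW. Qed.

Lemma cone_nbhdT : cone_nbhd Q setT.
Proof. by exists 1 => //; case: Qprime. Qed.

Lemma cone_nbhdI U W : cone_nbhd Q U -> cone_nbhd Q W -> cone_nbhd Q (U `&` W).
Proof.
move=> [y nQy Uy] [z nQz Wz]; exists (y * z); first exact: prime_notinM.
move=> J QJ nJyz; split; [apply: Uy | apply: Wz] => // Jt; apply: nJyz.
  exact: idealMr (iset_ideal J) Jt.
exact: idealMl (iset_ideal J) Jt.
Qed.

Lemma cone_nbhd_bigcap n (F : nat -> set (ideal R)) :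
  (forall i, (i < n)%N -> cone_nbhd Q (F i)) ->
  cone_nbhd Q [set I | forall i, (i < n)%N -> F i I].
Proof.
elim: n => [|n IHn] Fnbhd; first by apply: cone_nbhdS cone_nbhdT.
apply: cone_nbhdS (cone_nbhdI (IHn _) (Fnbhd n _)) => //.
- by move=> I [FI FnI] i; rewrite ltnS leq_eqVlt => /orP[/eqP -> | /FI].
- by move=> i /ltnW; apply: Fnbhd.
Qed.

Lemma cone_nbhd_zbasic xs : zbasic xs Q -> cone_nbhd Q (zbasic xs).
Proof.
move=> xsQ; have [y nQy _] := cone_nbhdT.
by exists y => // J QJ _ i /xsQ /QJ.
Qed.

Lemma cone_nbhd_setC_zbasic xs : ~ zbasic xs Q -> cone_nbhd Q (~` zbasic xs).
Proof.
move=> /existsNP[i /not_implyP[isize nQx]].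
by exists (nth 0 xs i) => // J _ nJx /(_ i isize).
Qed.

Lemma cons_open_cone_nbhd U : cons_open U -> U Q -> cone_nbhd Q U.
Proof.
elim=> {U} [U [[Uopen _] | [Copen Cqc]] UQ | _ | U W _ IHU _ IHW [UQ WQ] |
            G _ IHG [W GW WQ]].
- have [xs [xsQ xsU]] := Uopen Q UQ.
  exact: cone_nbhdS xsU (cone_nbhd_zbasic xsQ).
- pose G := [set W | exists2 xs, W = zbasic xs & zbasic xs `<=` ~` U].
  have [| |n [F [GF cover]]] := Cqc G.
  + by move=> _ [xs -> _]; apply: zariski_open_zbasic.
  + move=> I nUI; have [xs [xsI xsnU]] := Copen I nUI.
    by exists (zbasic xs) => //; exists xs.
  + apply: cone_nbhdS (cone_nbhd_bigcap (F := fun i => ~` F i) _).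
      move=> I nFI; apply: contrapT => /cover[i [ilt FiI]].
      exact: nFI i ilt FiI.
    move=> i /GF[xs -> xsnU]; apply: cone_nbhd_setC_zbasic.
    by move=> /xsnU; apply.
- exact: cone_nbhdT.
- exact: cone_nbhdI (IHU UQ) (IHW WQ).
- exact: cone_nbhdS (bigcup_sup GW) (IHG W GW WQ).
Qed.

End ConeNbhd.
End ConstructibleTopology.

Section Domain.
Variable V : idomainType.
Implicit Types (P : set V) (a b w x y : V).

Lemma rdivides_cancel a x y : a != 0 -> rdivides (a * x) (a * y) -> rdivides x y.
Proof. by move=> a0 [c]; rewrite -mulrA => /(mulfI a0) ->; exists c. Qed.

(* The contraction [a V_P ∩ V] of the principal ideal [a V_P] of the localization. *)
Definition local_multiples P a : set V :=
  [set z | exists2 s, ~ P s & rdivides a (z * s)].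

Section LocalMultiples.
Variable P : set V.
Hypothesis Pprime : is_prime P.

Lemma local_multiples_ideal a : is_ideal (local_multiples P a).
Proof.
split.
- by exists 1; [case: Pprime | exists 0; rewrite mul0r mulr0].
- move=> x y [s nPs [c xs]] [t nPt [d yt]].
  exists (s * t); first exact: prime_notinM.
  exists (c * t + d * s).
  have -> : (x + y) * (s * t) = x * s * t + y * t * s by ring.
  by rewrite xs yt; ring.
- move=> r x [s nPs [c xs]]; exists s => //.
  by exists (r * c); rewrite -mulrA xs mulrCA.
Qed.

Lemma local_multiples_self a : local_multiples P a a.
Proof. by exists 1; [case: Pprime | exists 1]. Qed.

Lemma local_multiples_sub a : P a -> local_multiples P a `<=` P.
Proof.
move=> Pa z [s nPs /(ideal_rdivides (prime_ideal Pprime) Pa)].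
by case: Pprime => _ _ Pmul /Pmul [] // /nPs.
Qed.

Lemma local_multiples_cancel a x b :
  local_multiples P a (x * b) -> ~ P b -> local_multiples P a x.
Proof.
move=> [s nPs [c xbs]] nPb; exists (b * s); first exact: prime_notinM.
by exists c; rewrite mulrA.
Qed.

Lemma local_multiples_sqr_notin w : P w -> w != 0 -> ~ local_multiples P (w ^+ 2) w.
Proof.
move=> Pw w0 [s nPs]; rewrite expr2 => /(rdivides_cancel w0) ws.
exact: nPs (ideal_rdivides (prime_ideal Pprime) Pw ws).
Qed.

End LocalMultiples.

Definition power_multiples b : set V := [set z | forall n, rdivides (b ^+ n) z].

Section ValuationDomain.
Hypothesis hV : valuation_domain V.

Lemma rdivides_notin (I : set V) q x : is_ideal I -> I q -> ~ I x -> rdivides x q.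
Proof. by move=> idI Iq nIx; case: (hV x q) => // /(ideal_rdivides idI Iq). Qed.

Lemma prime_sub_radical (Q I : set V) p :
  is_prime Q -> is_ideal I -> radical I p -> ~ Q p -> Q `<=` I.
Proof.
move=> Qprime idI [n Ipn] nQp q Qq; apply: ideal_rdivides idI Ipn _.
by apply: rdivides_notin (prime_ideal Qprime) Qq _ => /(primeX Qprime).
Qed.

Lemma power_multiples_prime b : ~ rdivides b 1 -> is_prime (power_multiples b).
Proof.
move=> nb1; have idL : is_ideal (power_multiples b).
  split=> [n | x y Lx Ly n | r x Lx n]; first exact: ideal0 (rdivides_ideal _).
    exact: idealD (rdivides_ideal _) (Lx n) (Ly n).
  exact: idealMl (rdivides_ideal _) (Lx n).
split=> // [L1 | x y Lxy]; first by apply: nb1; have := L1 1%N; rewrite expr1.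
apply: contrapT => /not_orP[nLx nLy].
have [m nbm_x] : exists m, ~ rdivides (b ^+ m) x by apply/existsNP.
have [k nbk_y] : exists k, ~ rdivides (b ^+ k) y by apply/existsNP.
have [c bm] : rdivides x (b ^+ m) by case: (hV x (b ^+ m)).
have [d bk] : rdivides y (b ^+ k) by case: (hV y (b ^+ k)).
have [e xy] := Lxy (m + k).+1.
have xy0 : x * y != 0 by rewrite mulf_neq0 // (ideal_notin_neq0 idL).
apply: nb1; apply: (@rdivides_cancel (x * y)) => //; exists (c * d * e).
by rewrite mulr1 {1}xy exprS exprD bm bk; ring.
Qed.

Section DirectlyBelow.
Variables P Q : set V.
Hypotheses (Pprime : is_prime P) (QP : directly_below Q P).

Let Qprime : is_prime Q. Proof. by case: QP. Qed.

(* Otherwise every power of [b] divides [x], and the prime [∩ b^n V] would lie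
   strictly between [Q] and [P]. *)
Lemma directly_below_rdividesX x b :
  ~ Q x -> P b -> ~ Q b -> exists n, rdivides x (b ^+ n).
Proof.
move=> nQx Pb nQb; have [_ _ _ Qmax] := QP.
apply: contrapT => /forallNP nxb.
have bx n : rdivides (b ^+ n) x by case: (hV x (b ^+ n)) => // /nxb.
have nb1 := prime_notin_rdivides1 Pprime Pb.
have QL : Q `<=` power_multiples b.
  by move=> q Qq n; apply: rdivides_notin (prime_ideal Qprime) Qq _ => /(primeX Qprime).
have LP : power_multiples b `<=` P.
  by move=> z /(_ 1%N); rewrite expr1; apply: ideal_rdivides (prime_ideal Pprime) Pb.
case: (Qmax _ (power_multiples_prime nb1) QL LP) => [LQ | LP'].
  by apply: nQx; rewrite -LQ.
have b0 := ideal_notin_neq0 (prime_ideal Qprime) nQb.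
have : power_multiples b b by rewrite LP'.
by move=> /(_ 2%N); rewrite -[b in rdivides _ b]mulr1 expr2 => /(rdivides_cancel b0).
Qed.

Lemma radical_directly_below I x :
  is_ideal I -> I `<=` P -> I x -> ~ Q x -> radical I = P.
Proof.
move=> idI IP Ix nQx; apply/seteqP; split=> [z [n /IP /(primeX Pprime)] // | p Pp].
have [Qp | nQp] := pselect (Q p).
  exists 1%N; rewrite expr1.
  exact: ideal_rdivides idI Ix (rdivides_notin (prime_ideal Qprime) Qp nQx).
have [n xpn] := directly_below_rdividesX nQx Pp nQp.
by exists n; apply: ideal_rdivides idI Ix xpn.
Qed.

Lemma primary_notin w : P w -> ~ Q w ->
  exists2 J : ideal V, primaries_of P J & ~ iset J w.
Proof.
move=> Pw nQw; have nQw2 : ~ Q (w ^+ 2) by move/(primeX Qprime).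
have Pw2 : P (w ^+ 2) by rewrite expr2; apply: idealMl (prime_ideal Pprime) Pw.
have JP := local_multiples_sub Pprime Pw2.
have idJ := local_multiples_ideal Pprime (w ^+ 2).
have radJ := radical_directly_below idJ JP (local_multiples_self Pprime _) nQw2.
exists (Ideal idJ) => /=; last first.
  exact: local_multiples_sqr_notin Pw (ideal_notin_neq0 (prime_ideal Qprime) nQw).
split=> //; split=> // [/JP | x b Jxb]; first by case: Pprime.
have [Pb | nPb] := pselect (P b); first by right; rewrite -radJ in Pb.
by left; apply: local_multiples_cancel Jxb nPb.
Qed.

End DirectlyBelow.
End ValuationDomain.
End Domain.

Section PrimariesClosure.
Variable V : idomainType.
Hypothesis hV : valuation_domain V.

Lemma all_primaries_proconstructible : proconstructible (@all_primaries V).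
Proof.
apply: cons_open_nbhd => I /= nI.
have [I1 | nI1] := pselect (iset I 1).
  exists (zbasic [:: 1]); first exact: cons_open_zbasic1.
  by split=> [|J /zbasic1 J1 [_]]; first exact/zbasic1.
have [a [b [Iab nIa nIb]]] : exists a b,
    [/\ iset I (a * b), ~ iset I a & forall n, ~ iset I (b ^+ n)].
  apply: contrapT => noab; apply: nI; split=> // [|a b Iab]; first exact: iset_ideal.
  have [Ia | nIa] := pselect (iset I a); [by left | right].
  by apply: contrapT => /forallNP nIb; apply: noab; exists a, b.
exists (zbasic [:: a * b] `&` ~` zbasic [:: a]).
  exact: gen_setI (cons_open_zbasic1 _) (cons_open_setC_zbasic1 _).
split=> [|J [/zbasic1 Jab nJa] [idJ _ Jprimary]].
  by split=> [|/zbasic1]; first exact/zbasic1.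
have {}nJa : ~ iset J a by move/zbasic1.
case: (Jprimary a b Jab) => [// | [n Jbn]].
case: (hV a (b ^+ n)) => [[c bn] | ban]; last exact: nJa (ideal_rdivides idJ Jbn ban).
by apply: (nIb n.+1); rewrite exprSr bn mulrAC; apply: idealMr (iset_ideal I) Iab.
Qed.

Section DirectlyBelow.
Variables P Q : ideal V.
Hypotheses (Pprime : is_prime P) (QP : directly_below Q P).

Let Qprime : is_prime Q. Proof. by case: QP. Qed.

Lemma directly_below_sub_primary (J : ideal V) : primaries_of P J -> Q `<=` iset J.
Proof.
move=> [[idJ _ _] radJ]; have [p Pp nQp] := directly_below_witness QP.
have Jp : radical J p by rewrite radJ.
exact: prime_sub_radical Qprime idJ Jp nQp.
Qed.

Lemma directly_below_in_cons_closure : cons_closure (primaries_of P) Q.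
Proof.
move=> U Uopen UQ; have [y nQy Uy] := cons_open_cone_nbhd Qprime Uopen UQ.
have [p Pp nQp] := directly_below_witness QP.
have [J PJ nJpy] := primary_notin hV Pprime QP
  (idealMr y (prime_ideal Pprime) Pp) (prime_notinM Qprime nQp nQy).
exists J; split=> //; apply: Uy (directly_below_sub_primary PJ) _ => Jy.
by apply: nJpy; apply: idealMl (iset_ideal J) Jy.
Qed.

Lemma cons_closure_primaries_sub :
  cons_closure (primaries_of P) `<=` primaries_of P `|` [set Q].
Proof.
move=> I clI.
have Iprimary : is_primary I.
  by apply: (cons_closure_min all_primaries_proconstructible _ clI) => J [].
have IP : iset I `<=` P.
  by move=> x /(cons_closure_witness clI) [J [_ <-] Jx]; exists 1%N; rewrite expr1.
have QI : Q `<=` iset I.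
  move=> q Qq; apply: cons_closure_forall clI _ => J.
  by move/directly_below_sub_primary; apply.
have [IQ | /nonsubset [x [Ix nQx]]] := pselect (iset I `<=` Q).
  by right; apply: ideal_inj; apply/seteqP; split.
left; split=> //.
exact: (radical_directly_below hV Pprime QP (iset_ideal I) IP Ix nQx).
Qed.

End DirectlyBelow.
End PrimariesClosure.

Theorem proposition5p6 (V : idomainType) (hV : valuation_domain V) :
  (forall P Q : ideal V,
      is_prime P -> branched P -> directly_below Q P ->
      cons_closure (primaries_of P) = primaries_of P `|` [set Q]) /\
  proconstructible (@all_primaries V).
Proof.
split; last exact: all_primaries_proconstructible.
(* [branched P] is unused: by [primary_notin] it follows from [directly_below Q P]. *)
move=> P Q Pprime _ QP; apply/seteqP; split.
  exact: cons_closure_primaries_sub.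
by move=> I [/sub_cons_closure // | ->]; apply: directly_below_in_cons_closure.
Qed.
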